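(* Let $\mathscr{C}_n$ be the set of Catalan words of length $2n$. For every integer $m\ge 2$ and every $0\le r\le m-1$, $$\lim_{n\to\infty}\frac{\left|\{w\in\mathscr{C}_n:\ \mathrm{maj}(w)\equiv r\pmod m\}\right|}{|\mathscr{C}_n|}=\frac1m ,$$ where $|\mathscr{C}_n|=\frac{1}{n+1}\binom{2n}{n}$. That is, the major index over Catalan words of length $2n$ has the balanced property.
   Context: A Catalan word of length $2n$ is a sequence $w=w_1w_2\cdots w_{2n}$ consisting of $n$ zeros and $n$ ones such that no prefix contains more $1$'s than $0$'s. Its major index is $\mathrm{maj}(w)=\sum_{i:\,w_i>w_{i+1}} i$. A statistic $\xi$ on sets $Q_n$ has the balanced property if for every $m\ge 2$ and every $0\le r\le m-1$, $\lim_{n\to\infty}|\{\pi\in Q_n:\xi(\pi)\equiv r \pmod m\}|/|Q_n| = 1/m$. *)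

From Stdlib Require Import Reals Arith List Bool.
Import ListNotations.

(* A binary word is a list of booleans: false = letter 0, true = letter 1. *)

Fixpoint words (k : nat) : list (list bool) :=
  match k with
  | 0 => [ [] ]
  | S k' => flat_map (fun w => [false :: w; true :: w]) (words k')
  end.

Definition nzeros (w : list bool) : nat := count_occ Bool.bool_dec w false.
Definition nones  (w : list bool) : nat := count_occ Bool.bool_dec w true.

Definition is_catalan (n : nat) (w : list bool) : bool :=
  Nat.eqb (length w) (2 * n)
  && Nat.eqb (nzeros w) n
  && Nat.eqb (nones w) n
  && forallb (fun j => Nat.leb (nones (firstn j w)) (nzeros (firstn j w)))
             (seq 0 (S (length w))).

(* Letter w_i (1-indexed) as a number 0/1. *)
Definition letter (w : list bool) (i : nat) : nat :=
  if nth (i - 1) w false then 1 else 0.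

Definition maj (w : list bool) : nat :=
  fold_right Nat.add 0
    (map (fun i => if Nat.ltb (letter w (S i)) (letter w i) then i else 0)
         (seq 1 (length w - 1))).

Definition catalan_words (n : nat) : list (list bool) :=
  filter (is_catalan n) (words (2 * n)).

Definition maj_class_count (m r n : nat) : nat :=
  length (filter (fun w => Nat.eqb (maj w mod m) r) (catalan_words n)).

(* Cut a word of length 2n into K = (2n) / (m + 2) blocks of length m + 2 (plus a
   remainder).  Call the block 0^(j+1) 1 0^(m-j), for j < m, a gadget of index j.
   Replacing the first gadget of a Catalan word by the gadget of index j + 1 mod m
   keeps the word Catalan, is injective, and adds 1 to maj modulo m; hence the
   Catalan words containing a gadget are equidistributed among the residues of maj.
   At most (2^(m+2) - 1)^K 2^((2n) mod (m+2)) = (1 - 2^-(m+2))^K 4^n words have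
   no gadget, which is negligible against |C_n| >= 4^n / (2n+1)^2; the latter bound
   comes from negating prefixes (to reach n zeros) and rotating (the cycle lemma). *)

From Stdlib Require Import Reals Arith List Bool Lia ZArith Lra.
Import ListNotations.

(** * Counting words *)

Lemma in_words k w : In w (words k) <-> length w = k.
Proof.
  revert w; induction k as [|k IH]; intros w; simpl.
  - split; [now intros [<- | []]|].
    destruct w; [auto | discriminate].
  - rewrite in_flat_map; split.
    + intros [u [Hu Hw]]; apply IH in Hu.
      destruct Hw as [<- | [<- | []]]; simpl; lia.
    + destruct w as [|x u]; simpl; intros Hw; [discriminate|].
      exists u; split; [apply IH; lia | destruct x; simpl; auto].
Qed.

Lemma NoDup_words k : NoDup (words k).
Proof.
  induction k as [|k IH]; simpl; [repeat constructor; simpl; tauto|].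
  induction IH as [|u l Hu _ IHl]; simpl; [constructor|].
  change ((false :: u) :: (true :: u) :: flat_map (fun w => [false :: w; true :: w]) l)
    with ([false :: u; true :: u] ++ flat_map (fun w => [false :: w; true :: w]) l).
  apply NoDup_app; auto.
  - constructor; [simpl; intros [H | []]; discriminate|].
    constructor; [simpl; tauto | constructor].
  - intros v Hv Hin. apply in_flat_map in Hin as [v' [Hv' Hin]].
    simpl in Hv, Hin.
    destruct Hv as [<- | [<- | []]]; destruct Hin as [E | [E | []]];
      inversion E; subst; contradiction.
Qed.

Lemma filter_length_le_in {A} (P Q : A -> bool) l :
  (forall x, In x l -> P x = true -> Q x = true) ->
  length (filter P l) <= length (filter Q l).
Proof.
  induction l as [|a l IH]; simpl; intros H; auto.
  specialize (IH (fun x Hx => H x (or_intror Hx))).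
  specialize (H a (or_introl eq_refl)).
  destruct (P a), (Q a); simpl; try lia; discriminate (H eq_refl).
Qed.

Lemma filter_length_le_inj {A} (f : A -> A) (P Q : A -> bool) l l' :
  NoDup l ->
  (forall x, In x l -> P x = true -> In (f x) l' /\ Q (f x) = true) ->
  (forall x y, In x l -> In y l -> P x = true -> P y = true -> f x = f y -> x = y) ->
  length (filter P l) <= length (filter Q l').
Proof.
  intros Hl Hmaps Hinj.
  rewrite <- (length_map f).
  apply NoDup_incl_length.
  - apply NoDup_map_NoDup_ForallPairs; [|now apply NoDup_filter].
    intros x y Hx Hy. apply filter_In in Hx, Hy. apply Hinj; tauto.
  - intros z Hz. apply in_map_iff in Hz as [x [<- Hx]].
    apply filter_In in Hx. apply filter_In, Hmaps; tauto.
Qed.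

Lemma filter_length_split {A} (P Q : A -> bool) l :
  length (filter P l)
  = length (filter (fun x => P x && negb (Q x)) l) + length (filter (fun x => P x && Q x) l).
Proof. induction l as [|a l IH]; simpl; auto. destruct (P a), (Q a); simpl; lia. Qed.

Fixpoint nat_sum (f : nat -> nat) (n : nat) : nat :=
  match n with 0 => 0 | S n' => nat_sum f n' + f n' end.

Lemma nat_sum_ext f g n : (forall j, j < n -> f j = g j) -> nat_sum f n = nat_sum g n.
Proof. induction n; simpl; intros H; auto. rewrite IHn, H; auto. Qed.

Lemma nat_sum_add f g n : nat_sum (fun j => f j + g j) n = nat_sum f n + nat_sum g n.
Proof. induction n; simpl; lia. Qed.

Lemma nat_sum_const c n : nat_sum (fun _ => c) n = n * c.
Proof. induction n; simpl; lia. Qed.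

Lemma nat_sum_indicator x n :
  nat_sum (fun j => if Nat.eqb x j then 1 else 0) n = if Nat.ltb x n then 1 else 0.
Proof.
  induction n as [|n IH]; simpl; [now destruct x|].
  rewrite IH. destruct (Nat.ltb_spec x n), (Nat.eqb_spec x n), (Nat.ltb_spec x (S n)); lia.
Qed.

Lemma filter_length_le_cover {A} (P : A -> bool) (Q : nat -> A -> bool) n l :
  (forall x, In x l -> P x = true -> exists j, j < n /\ Q j x = true) ->
  length (filter P l) <= nat_sum (fun j => length (filter (Q j) l)) n.
Proof.
  induction l as [|a l IH]; simpl; intros Hcover.
  { rewrite nat_sum_const; lia. }
  rewrite (nat_sum_ext _ (fun j => (if Q j a then 1 else 0) + length (filter (Q j) l)))
    by (intros j _; destruct (Q j a); reflexivity).
  rewrite nat_sum_add.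
  specialize (IH (fun x Hx => Hcover x (or_intror Hx))).
  destruct (P a) eqn:Ha; simpl; [|lia].
  destruct (Hcover a (or_introl eq_refl) Ha) as [j [Hj HQ]].
  enough (1 <= nat_sum (fun j => if Q j a then 1 else 0) n) by lia.
  clear - Hj HQ. induction n as [|n IHn]; simpl; [lia|].
  destruct (Nat.eq_dec j n) as [-> | Hne]; [rewrite HQ; lia|].
  specialize (IHn ltac:(lia)); lia.
Qed.

Lemma filter_length_partition {A} (f : A -> nat) (P : A -> bool) n l :
  (forall x, f x < n) ->
  nat_sum (fun r => length (filter (fun x => Nat.eqb (f x) r && P x) l)) n
  = length (filter P l).
Proof.
  intros Hf. induction l as [|a l IH]; simpl; [now rewrite nat_sum_const|].
  rewrite (nat_sum_ext _ (fun r => (if Nat.eqb (f a) r then (if P a then 1 else 0) else 0)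
      + length (filter (fun x => Nat.eqb (f x) r && P x) l)))
    by (intros j _; destruct (Nat.eqb (f a) j), (P a); reflexivity).
  rewrite nat_sum_add, IH.
  destruct (P a); simpl.
  - rewrite nat_sum_indicator. specialize (Hf a). destruct (Nat.ltb_spec (f a) n); lia.
  - rewrite (nat_sum_ext _ (fun _ => 0)) by (intros j _; now destruct (Nat.eqb (f a) j)).
    rewrite nat_sum_const; lia.
Qed.

Definition count_words (k : nat) (P : list bool -> bool) : nat := length (filter P (words k)).

Lemma count_words_S k P :
  count_words (S k) P
  = count_words k (fun w => P (false :: w)) + count_words k (fun w => P (true :: w)).
Proof.
  unfold count_words; simpl. induction (words k) as [|a l IH]; simpl; auto.
  destruct (P (false :: a)), (P (true :: a)); simpl; rewrite IH; lia.
Qed.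

Lemma count_words_all k : count_words k (fun _ => true) = 2 ^ k.
Proof. induction k as [|k IH]; [reflexivity|]. rewrite count_words_S. simpl. lia. Qed.

Lemma count_words_negb k P : count_words k P + count_words k (fun w => negb (P w)) = 2 ^ k.
Proof.
  unfold count_words. rewrite filter_length, <- (count_words_all k).
  unfold count_words. f_equal. induction (words k); simpl; congruence.
Qed.

Lemma count_words_app a b (A B : list bool -> bool) :
  count_words (a + b) (fun w => A (firstn a w) && B (skipn a w))
  = count_words a A * count_words b B.
Proof.
  revert A; induction a as [|a IH]; intros A; simpl.
  - unfold count_words at 2; simpl.
    destruct (A []); simpl; [now rewrite Nat.add_0_r|].
    unfold count_words. induction (words b); simpl; auto.
  - rewrite !count_words_S. simpl.
    rewrite (IH (fun u => A (false :: u))), (IH (fun u => A (true :: u))). lia.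
Qed.

Lemma count_words_bij N Q (g h : list bool -> list bool) :
  (forall w, length w = N -> length (g w) = N) ->
  (forall w, length w = N -> length (h w) = N) ->
  (forall w, length w = N -> g (h w) = w) ->
  (forall w, length w = N -> h (g w) = w) ->
  count_words N (fun w => Q (g w)) = count_words N Q.
Proof.
  intros Hg Hh Hgh Hhg. unfold count_words. apply Nat.le_antisymm.
  - apply (filter_length_le_inj g); [apply NoDup_words | |].
    + intros w Hw HQ. apply in_words in Hw. now rewrite in_words, Hg.
    + intros w v Hw Hv _ _ E. apply in_words in Hw, Hv.
      now rewrite <- (Hhg w), <- (Hhg v), E.
  - apply (filter_length_le_inj h); [apply NoDup_words | |].
    + intros w Hw HQ. apply in_words in Hw. now rewrite in_words, Hh, Hgh.
    + intros w v Hw Hv _ _ E. apply in_words in Hw, Hv.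
      now rewrite <- (Hgh w), <- (Hgh v), E.
Qed.

Lemma count_words_le_cover N c P Q (g h : nat -> list bool -> list bool) :
  (forall j w, length w = N -> length (g j w) = N) ->
  (forall j w, length w = N -> length (h j w) = N) ->
  (forall j w, j < c -> length w = N -> g j (h j w) = w) ->
  (forall j w, j < c -> length w = N -> h j (g j w) = w) ->
  (forall w, length w = N -> P w = true -> exists j, j < c /\ Q (g j w) = true) ->
  count_words N P <= c * count_words N Q.
Proof.
  intros Hg Hh Hgh Hhg Hcover.
  rewrite <- nat_sum_const.
  rewrite <- (nat_sum_ext (fun j => count_words N (fun w => Q (g j w))))
    by (intros j Hj; apply (count_words_bij _ _ _ (h j)); auto).
  apply filter_length_le_cover.
  intros w Hw HP. apply in_words in Hw. now apply Hcover.
Qed.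

(** * A lower bound for the Catalan numbers *)

Definition height (w : list bool) : Z := (Z.of_nat (nzeros w) - Z.of_nat (nones w))%Z.

Lemma nzeros_app u v : nzeros (u ++ v) = nzeros u + nzeros v.
Proof. apply count_occ_app. Qed.

Lemma nones_app u v : nones (u ++ v) = nones u + nones v.
Proof. apply count_occ_app. Qed.

Lemma nzeros_cons x w : nzeros (x :: w) = (if x then 0 else 1) + nzeros w.
Proof. now destruct x. Qed.

Lemma nones_cons x w : nones (x :: w) = (if x then 1 else 0) + nones w.
Proof. now destruct x. Qed.

Lemma nzeros_add_nones w : nzeros w + nones w = length w.
Proof.
  induction w as [|x w IH]; [reflexivity|].
  rewrite nzeros_cons, nones_cons; simpl; destruct x; lia.
Qed.

Lemma height_app u v : height (u ++ v) = (height u + height v)%Z.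
Proof. unfold height. rewrite nzeros_app, nones_app. lia. Qed.

Lemma is_catalan_iff n w :
  is_catalan n w = true <->
  length w = 2 * n /\ nzeros w = n /\ nones w = n /\ forall j, (0 <= height (firstn j w))%Z.
Proof.
  unfold is_catalan, height. rewrite !andb_true_iff, !Nat.eqb_eq, forallb_forall.
  split.
  - intros [[[Hlen Hz] Ho] Hpre]. repeat split; auto. intros j.
    specialize (Hpre (min j (length w))). rewrite in_seq, Nat.leb_le in Hpre.
    rewrite <- firstn_firstn, firstn_all in Hpre. lia.
  - intros [Hlen [Hz [Ho Hpre]]]. repeat split; auto. intros j _.
    specialize (Hpre j). apply Nat.leb_le. lia.
Qed.

Fixpoint negate_prefix (j : nat) (w : list bool) : list bool :=
  match j, w with
  | S j', x :: w' => negb x :: negate_prefix j' w'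
  | _, _ => w
  end.

Lemma length_negate_prefix j w : length (negate_prefix j w) = length w.
Proof. revert w; induction j; destruct w; simpl; auto. Qed.

Lemma negate_prefix_involutive j w : negate_prefix j (negate_prefix j w) = w.
Proof. revert w; induction j; destruct w; simpl; auto. now rewrite IHj, negb_involutive. Qed.

Lemma nzeros_negate_prefix_S j w :
  nzeros (negate_prefix (S j) w) <= nzeros (negate_prefix j w) + 1 /\
  nzeros (negate_prefix j w) <= nzeros (negate_prefix (S j) w) + 1.
Proof.
  revert w; induction j as [|j IH]; intros [|x w]; try (split; apply Nat.le_add_r).
  - cbn [negate_prefix]. rewrite !nzeros_cons; destruct x; simpl; lia.
  - change (negate_prefix (S ?k) (x :: w)) with (negb x :: negate_prefix k w).
    rewrite !(nzeros_cons (negb x)). specialize (IH w). lia.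
Qed.

Lemma nzeros_negate_all w : nzeros (negate_prefix (length w) w) = nones w.
Proof.
  induction w as [|x w IH]; [reflexivity|]. simpl.
  rewrite nzeros_cons, nones_cons, IH. now destruct x.
Qed.

Lemma discrete_ivt (f : nat -> nat) t N :
  (forall j, f (S j) <= f j + 1 /\ f j <= f (S j) + 1) ->
  f 0 <= t <= f N \/ f N <= t <= f 0 ->
  exists j, j <= N /\ f j = t.
Proof.
  intros Hstep. induction N as [|N IH]; intros Ht.
  - exists 0; split; lia.
  - destruct (Nat.eq_dec (f (S N)) t) as [HN | HN]; [exists (S N); split; auto|].
    specialize (Hstep N).
    destruct IH as [j [Hj Hfj]]; [lia|]. exists j; split; auto.
Qed.

Definition balanced (n : nat) (w : list bool) : bool := Nat.eqb (nzeros w) n.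

(* Negating a growing prefix moves the number of zeros from nzeros w to
   nones w = 2n - nzeros w one step at a time, so it passes through n. *)
Lemma pow4_le_count_balanced n : 4 ^ n <= S (2 * n) * count_words (2 * n) (balanced n).
Proof.
  replace (4 ^ n) with (2 ^ (2 * n)) by now rewrite Nat.pow_mul_r.
  rewrite <- count_words_all.
  apply (count_words_le_cover _ _ _ _ negate_prefix negate_prefix);
    try (intros; now rewrite ?length_negate_prefix, ?negate_prefix_involutive).
  intros w Hw _.
  assert (Hall := nzeros_negate_all w). assert (Hsum := nzeros_add_nones w).
  destruct (discrete_ivt (fun j => nzeros (negate_prefix j w)) n (2 * n)) as [j [Hj Hfj]].
  - intros j; apply nzeros_negate_prefix_S.
  - cbv beta. rewrite <- Hw, Hall. simpl negate_prefix. lia.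
  - exists j; split; [lia|]. now apply Nat.eqb_eq.
Qed.

Definition rotate (p : nat) (w : list bool) : list bool := skipn p w ++ firstn p w.

Lemma length_rotate p w : length (rotate p w) = length w.
Proof. unfold rotate. rewrite length_app, length_skipn, length_firstn. lia. Qed.

Lemma rotate_back p w : p <= length w -> rotate (length w - p) (rotate p w) = w.
Proof.
  intros Hp. unfold rotate at 2.
  assert (Hs : length (skipn p w) = length w - p) by (rewrite length_skipn; lia).
  unfold rotate. rewrite skipn_app, firstn_app, Hs, Nat.sub_diag.
  rewrite (skipn_all2 (n := length w - p)), (firstn_all2 (n := length w - p)) by lia.
  simpl. now rewrite app_nil_r, firstn_skipn.
Qed.

Lemma nat_argmin (h : nat -> Z) N : exists p, p <= N /\ forall q, q <= N -> (h p <= h q)%Z.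
Proof.
  induction N as [|N [p [Hp Hmin]]].
  - exists 0; split; auto. intros q Hq. replace q with 0 by lia. lia.
  - destruct (Z.le_gt_cases (h p) (h (S N))).
    + exists p; split; [lia|]. intros q Hq.
      destruct (Nat.eq_dec q (S N)) as [-> | Hne]; auto. apply Hmin; lia.
    + exists (S N); split; auto. intros q Hq.
      destruct (Nat.eq_dec q (S N)) as [-> | Hne]; [lia|]. specialize (Hmin q ltac:(lia)). lia.
Qed.

Lemma firstn_add p j (w : list bool) : firstn (p + j) w = firstn p w ++ firstn j (skipn p w).
Proof. revert w; induction p; intros [|x w]; simpl; rewrite ?firstn_nil, ?IHp; auto. Qed.

(* Cycle lemma: rotate at a prefix of minimal height. *)
Lemma rotate_to_catalan n w :
  length w = 2 * n -> nzeros w = n -> exists p, p <= 2 * n /\ is_catalan n (rotate p w) = true.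
Proof.
  intros Hlen Hz.
  assert (Ho : nones w = n) by (pose proof (nzeros_add_nones w); lia).
  destruct (nat_argmin (fun q => height (firstn q w)) (2 * n)) as [p [Hp Hmin]].
  exists p; split; auto. apply is_catalan_iff.
  assert (Hw : w = firstn p w ++ skipn p w) by (symmetry; apply firstn_skipn).
  assert (Hs : length (skipn p w) = 2 * n - p) by (rewrite length_skipn; lia).
  assert (Hzw := Hz). assert (How := Ho).
  rewrite Hw, nzeros_app in Hzw. rewrite Hw, nones_app in How.
  unfold rotate. rewrite length_app, nzeros_app, nones_app, Hs, length_firstn.
  repeat split; try lia.
  intros j. rewrite firstn_app, height_app, Hs.
  destruct (Nat.le_gt_cases j (2 * n - p)).
  - replace (j - (2 * n - p)) with 0 by lia.
    specialize (Hmin (p + j) ltac:(lia)).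
    rewrite firstn_add, height_app in Hmin. cbn [firstn]. change (height []) with 0%Z. lia.
  - rewrite firstn_all2, firstn_firstn by lia.
    specialize (Hmin (min (j - (2 * n - p)) p) ltac:(lia)).
    assert (height (skipn p w) = - height (firstn p w))%Z by (unfold height; lia). lia.
Qed.

Lemma count_balanced_le_catalan n :
  count_words (2 * n) (balanced n) <= S (2 * n) * count_words (2 * n) (is_catalan n).
Proof.
  apply (count_words_le_cover _ _ _ _ rotate (fun p => rotate (2 * n - p)));
    try (intros; now rewrite !length_rotate).
  - intros j w Hj Hw. assert (E := rotate_back (2 * n - j) w ltac:(lia)).
    rewrite Hw in E. now replace (2 * n - (2 * n - j)) with j in E by lia.
  - intros j w Hj Hw. rewrite <- Hw. apply rotate_back. lia.
  - intros w Hw Hz. apply Nat.eqb_eq in Hz.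
    destruct (rotate_to_catalan n w Hw Hz) as [p [Hp Hcat]]. exists p; split; [lia | exact Hcat].
Qed.

Lemma pow4_le_catalan_count n : 4 ^ n <= S (2 * n) * S (2 * n) * length (catalan_words n).
Proof.
  change (length (catalan_words n)) with (count_words (2 * n) (is_catalan n)).
  rewrite <- Nat.mul_assoc.
  eapply Nat.le_trans; [apply pow4_le_count_balanced|].
  apply Nat.mul_le_mono_l, count_balanced_le_catalan.
Qed.

(** * The major index and gadgets *)

(* [maj_from i prev w] is the major index contribution of [w] when its first
   letter sits at position [i] and is preceded by the letter [prev]. *)
Fixpoint maj_from (i : nat) (prev : bool) (w : list bool) : nat :=
  match w with
  | [] => 0
  | x :: w' => (if prev && negb x then i - 1 else 0) + maj_from (S i) x w'
  end.

Lemma maj_from_shift_index : forall w x c,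
  fold_right Nat.add 0
    (map (fun i => if Nat.ltb (letter (x :: w) (S i)) (letter (x :: w) i) then i + c else 0)
         (seq 1 (length w)))
  = maj_from (c + 2) x w.
Proof.
  induction w as [|y w IH]; intros x c; [reflexivity|].
  change (length (y :: w)) with (S (length w)).
  rewrite <- cons_seq, <- seq_shift. cbn [map fold_right]. rewrite map_map.
  rewrite (map_ext_in _ (fun i => if Nat.ltb (letter (y :: w) (S i)) (letter (y :: w) i)
                                  then i + S c else 0)).
  2:{ intros [|i] Hi; [apply in_seq in Hi; lia|].
      unfold letter; simpl. now rewrite Nat.sub_0_r, <- plus_n_Sm. }
  rewrite IH. replace (S c + 2) with (S (c + 2)) by lia.
  unfold letter; simpl. destruct x, y; simpl; lia.
Qed.

Lemma maj_maj_from w : maj w = maj_from 1 false w.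
Proof.
  destruct w as [|x w]; [reflexivity|].
  unfold maj. cbn [length]. rewrite Nat.sub_1_r.
  change (maj_from 1 false (x :: w)) with (maj_from (0 + 2) x w).
  rewrite <- maj_from_shift_index.
  f_equal. apply map_ext. intros i. now rewrite Nat.add_0_r.
Qed.

Lemma last_cons_default (x c : bool) u : last (x :: u) c = last u x.
Proof.
  revert x c; induction u as [|y u IH]; intros x c; [reflexivity|].
  change (last (x :: y :: u) c) with (last (y :: u) c). now rewrite !IH.
Qed.

Lemma maj_from_app u : forall v i c,
  maj_from i c (u ++ v) = maj_from i c u + maj_from (i + length u) (last u c) v.
Proof.
  induction u as [|x u IH]; intros v i c; cbn [app maj_from length]; [now rewrite Nat.add_0_r|].
  rewrite IH, last_cons_default. replace (S i + length u) with (i + S (length u)) by lia.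
  lia.
Qed.

Definition gadget (m j : nat) : list bool :=
  false :: repeat false j ++ true :: repeat false (m - 1 - j) ++ [false].

Fixpoint leading_zeros (u : list bool) : nat :=
  match u with false :: u' => S (leading_zeros u') | _ => 0 end.

Definition gadget_index (u : list bool) : nat := pred (leading_zeros u).

Definition is_gadget (m : nat) (u : list bool) : bool :=
  Nat.ltb (gadget_index u) m
  && (if list_eq_dec bool_dec u (gadget m (gadget_index u)) then true else false).

Definition next_gadget (m : nat) (u : list bool) : list bool :=
  gadget m (S (gadget_index u) mod m).

Lemma leading_zeros_zeros_one j u : leading_zeros (repeat false j ++ true :: u) = j.
Proof. induction j; simpl; congruence. Qed.

Lemma gadget_index_gadget m j : gadget_index (gadget m j) = j.
Proof. apply leading_zeros_zeros_one. Qed.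

Lemma gadget_inj m j j' : gadget m j = gadget m j' -> j = j'.
Proof. intros E. now rewrite <- (gadget_index_gadget m j), E, gadget_index_gadget. Qed.

Lemma length_gadget m j : j < m -> length (gadget m j) = m + 2.
Proof.
  intros Hj. unfold gadget. simpl.
  rewrite length_app, repeat_length. simpl. rewrite length_app, repeat_length. simpl. lia.
Qed.

Lemma is_gadget_iff m u : is_gadget m u = true <-> exists j, j < m /\ u = gadget m j.
Proof.
  unfold is_gadget. rewrite andb_true_iff, Nat.ltb_lt. split.
  - intros [Hj Hu]. destruct (list_eq_dec _ _ _); [|discriminate]. eauto.
  - intros [j [Hj ->]]. rewrite gadget_index_gadget.
    destruct (list_eq_dec _ _ _); tauto.
Qed.

Lemma is_gadget_gadget m j : j < m -> is_gadget m (gadget m j) = true.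
Proof. intros Hj. apply is_gadget_iff. eauto. Qed.

Lemma next_gadget_gadget m j : next_gadget m (gadget m j) = gadget m (S j mod m).
Proof. unfold next_gadget. now rewrite gadget_index_gadget. Qed.

Lemma maj_from_zeros i k : maj_from i false (repeat false k) = 0.
Proof. revert i; induction k; intros i; simpl; auto. Qed.

Lemma last_zeros k : last (repeat false k) false = false.
Proof. induction k as [|[|k] IH]; auto. Qed.

Lemma last_gadget m j c : last (gadget m j) c = false.
Proof.
  replace (gadget m j)
    with ((false :: repeat false j ++ true :: repeat false (m - 1 - j)) ++ [false])
    by (unfold gadget; simpl; now rewrite <- app_assoc).
  apply last_last.
Qed.

Lemma maj_from_gadget m i c j :
  1 <= i -> maj_from i c (gadget m j) = (if c then i - 1 else 0) + S i + j.
Proof.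
  intros Hi. unfold gadget. cbn [maj_from].
  rewrite maj_from_app, maj_from_zeros, repeat_length, last_zeros. cbn [maj_from].
  destruct (m - 1 - j) as [|k]; cbn [repeat app maj_from].
  - destruct c; simpl; lia.
  - rewrite maj_from_app, maj_from_zeros, last_zeros. destruct c; simpl; lia.
Qed.

Lemma maj_gadget m p s : exists b, forall j, j < m -> maj (p ++ gadget m j ++ s) = b + j.
Proof.
  exists (maj_from 1 false p + (if last p false then length p else 0) + S (1 + length p)
          + maj_from (1 + length p + (m + 2)) false s).
  intros j Hj.
  rewrite maj_maj_from, !maj_from_app, maj_from_gadget, last_gadget, length_gadget by (auto; lia).
  replace (1 + length p - 1) with (length p) by lia. lia.
Qed.

Lemma nzeros_zeros k : nzeros (repeat false k) = k.
Proof. apply count_occ_repeat_eq; reflexivity. Qed.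

Lemma nones_zeros k : nones (repeat false k) = 0.
Proof. apply count_occ_repeat_neq; discriminate. Qed.

Lemma nzeros_gadget m j : j < m -> nzeros (gadget m j) = m + 1.
Proof.
  intros Hj. unfold gadget.
  rewrite nzeros_cons, nzeros_app, nzeros_cons, nzeros_app, !nzeros_zeros.
  change (nzeros [false]) with 1. simpl. lia.
Qed.

Lemma nones_gadget m j : nones (gadget m j) = 1.
Proof.
  unfold gadget. rewrite nones_cons, nones_app, nones_cons, nones_app, !nones_zeros. reflexivity.
Qed.

Lemma height_firstn_app k u v :
  height (firstn k (u ++ v)) = (height (firstn k u) + height (firstn (k - length u) v))%Z.
Proof. now rewrite firstn_app, height_app. Qed.

Lemma height_firstn_gadget m j k : (0 <= height (firstn k (gadget m j)))%Z.
Proof.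
  destruct k as [|k]; [reflexivity|].
  unfold gadget. cbn [firstn]. change (false :: ?u) with ([false] ++ u). rewrite height_app.
  set (t := repeat false j ++ true :: repeat false (m - 1 - j) ++ [false]).
  assert (Ht : nones t = 1)
    by (unfold t; now rewrite nones_app, nones_cons, nones_app, !nones_zeros).
  assert (Hk : nones (firstn k t) <= nones t)
    by (rewrite <- (firstn_skipn k t) at 2; rewrite nones_app; lia).
  change (height [false]) with 1%Z. unfold height. lia.
Qed.

Lemma is_catalan_swap_gadget n m p s j j' : j < m -> j' < m ->
  is_catalan n (p ++ gadget m j ++ s) = true -> is_catalan n (p ++ gadget m j' ++ s) = true.
Proof.
  intros Hj Hj'. rewrite !is_catalan_iff, !length_app, !nzeros_app, !nones_app,
    !length_gadget, !nzeros_gadget, !nones_gadget by auto.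
  intros [Hlen [Hz [Ho Hpre]]]. repeat split; auto. intros i.
  assert (Hp := Hpre (length p)).
  rewrite height_firstn_app, Nat.sub_diag, firstn_all in Hp. simpl in Hp.
  specialize (Hpre i). rewrite !height_firstn_app, length_gadget in Hpre by auto.
  rewrite !height_firstn_app, length_gadget by auto.
  destruct (Nat.le_gt_cases (m + 2) (i - length p)).
  - rewrite (firstn_all2 (gadget m j)) in Hpre by (rewrite length_gadget; lia).
    rewrite (firstn_all2 (gadget m j')) by (rewrite length_gadget; lia).
    assert (height (gadget m j) = height (gadget m j'))
      by (unfold height; now rewrite !nzeros_gadget, !nones_gadget). lia.
  - replace (i - length p - (m + 2)) with 0 by lia. simpl.
    assert (Hg := height_firstn_gadget m j' (i - length p)).
    destruct (Nat.le_gt_cases i (length p)).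
    + replace (i - length p) with 0 in * by lia. simpl in *. lia.
    + rewrite firstn_all2 by lia. lia.
Qed.

(** * Equidistribution over the words containing a gadget *)

Fixpoint no_gadget (m k : nat) (w : list bool) : bool :=
  match k with
  | 0 => true
  | S k' => negb (is_gadget m (firstn (m + 2) w)) && no_gadget m k' (skipn (m + 2) w)
  end.

Fixpoint advance_gadget (m k : nat) (w : list bool) : list bool :=
  match k with
  | 0 => w
  | S k' =>
      if is_gadget m (firstn (m + 2) w)
      then next_gadget m (firstn (m + 2) w) ++ skipn (m + 2) w
      else firstn (m + 2) w ++ advance_gadget m k' (skipn (m + 2) w)
  end.

Lemma firstn_skipn_app {A} n (u v : list A) :
  length u = n -> firstn n (u ++ v) = u /\ skipn n (u ++ v) = v.
Proof.
  intros <-. rewrite firstn_app, skipn_app, Nat.sub_diag, firstn_all, skipn_all.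
  simpl. now rewrite app_nil_r.
Qed.

Section AdvanceGadget.

Variable m : nat.
Hypothesis m_pos : 0 < m.

Lemma next_gadget_index_lt j : S j mod m < m.
Proof. apply Nat.mod_upper_bound. lia. Qed.

Lemma next_gadget_index_inj j j' : j < m -> j' < m -> S j mod m = S j' mod m -> j = j'.
Proof.
  intros Hj Hj'.
  assert (Hmod : forall x, x < m -> S x mod m = if Nat.eqb (S x) m then 0 else S x).
  { intros x Hx. destruct (Nat.eqb_spec (S x) m) as [-> | Hne].
    - apply Nat.Div0.mod_same.
    - apply Nat.mod_small. lia. }
  rewrite !Hmod by auto. destruct (Nat.eqb_spec (S j) m), (Nat.eqb_spec (S j') m); lia.
Qed.

Lemma advance_gadget_spec k w : no_gadget m k w = false ->
  exists p s j, j < m /\ w = p ++ gadget m j ++ s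
             /\ advance_gadget m k w = p ++ gadget m (S j mod m) ++ s.
Proof.
  revert w; induction k as [|k IH]; intros w Hw; [discriminate|].
  cbn [no_gadget advance_gadget] in Hw |- *.
  destruct (is_gadget m (firstn (m + 2) w)) eqn:Hg.
  - apply is_gadget_iff in Hg as [j [Hj Hu]].
    exists [], (skipn (m + 2) w), j. repeat split; auto.
    + cbn [app]. now rewrite <- Hu, firstn_skipn.
    + now rewrite Hu, next_gadget_gadget.
  - destruct (IH _ Hw) as [p [s [j [Hj [E1 E2]]]]].
    exists (firstn (m + 2) w ++ p), s, j. repeat split; auto.
    + now rewrite <- app_assoc, <- E1, firstn_skipn.
    + now rewrite E2, app_assoc.
Qed.

Lemma no_gadget_nil k : no_gadget m k [] = true.
Proof.
  induction k as [|k IH]; [reflexivity|]. cbn [no_gadget]. rewrite firstn_nil, skipn_nil, IH.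
  destruct (is_gadget m []) eqn:Hg; [|reflexivity].
  apply is_gadget_iff in Hg as [j [_ Hj]]. discriminate.
Qed.

Lemma advance_gadget_blocks k w : no_gadget m (S k) w = false ->
  firstn (m + 2) (advance_gadget m (S k) w)
    = (if is_gadget m (firstn (m + 2) w) then next_gadget m (firstn (m + 2) w)
       else firstn (m + 2) w)
  /\ skipn (m + 2) (advance_gadget m (S k) w)
    = (if is_gadget m (firstn (m + 2) w) then skipn (m + 2) w
       else advance_gadget m k (skipn (m + 2) w)).
Proof.
  intros Hw. cbn [advance_gadget]. destruct (is_gadget m (firstn (m + 2) w)) eqn:Hg.
  - apply is_gadget_iff in Hg as [j [Hj ->]]. rewrite next_gadget_gadget.
    apply firstn_skipn_app, length_gadget, next_gadget_index_lt.
  - apply firstn_skipn_app. rewrite length_firstn.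
    cbn [no_gadget] in Hw. rewrite Hg in Hw. simpl in Hw.
    destruct (Nat.le_gt_cases (m + 2) (length w)); [lia|].
    now rewrite skipn_all2, no_gadget_nil in Hw by lia.
Qed.

Lemma no_gadget_advance k w :
  no_gadget m k w = false -> no_gadget m k (advance_gadget m k w) = false.
Proof.
  revert w; induction k as [|k IH]; intros w Hw; [discriminate|].
  destruct (advance_gadget_blocks k w Hw) as [Hfirst Hrest].
  cbn [no_gadget]. rewrite Hfirst, Hrest.
  destruct (is_gadget m (firstn (m + 2) w)) eqn:Hg.
  - apply is_gadget_iff in Hg as [j [Hj ->]].
    now rewrite next_gadget_gadget, is_gadget_gadget by apply next_gadget_index_lt.
  - rewrite Hg. apply IH. cbn [no_gadget] in Hw. now rewrite Hg in Hw.
Qed.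

Lemma advance_gadget_inj k w w' :
  no_gadget m k w = false -> no_gadget m k w' = false ->
  advance_gadget m k w = advance_gadget m k w' -> w = w'.
Proof.
  revert w w'; induction k as [|k IH]; intros w w' Hw Hw' E; [discriminate|].
  destruct (advance_gadget_blocks k w Hw) as [Hfirst Hrest].
  destruct (advance_gadget_blocks k w' Hw') as [Hfirst' Hrest'].
  rewrite E, Hfirst' in Hfirst. rewrite E, Hrest' in Hrest.
  rewrite <- (firstn_skipn (m + 2) w), <- (firstn_skipn (m + 2) w').
  cbn [no_gadget] in Hw, Hw'.
  destruct (is_gadget m (firstn (m + 2) w)) eqn:Hg, (is_gadget m (firstn (m + 2) w')) eqn:Hg'.
  - apply is_gadget_iff in Hg as [j [Hj Hu]], Hg' as [j' [Hj' Hu']].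
    rewrite Hu, Hu', !next_gadget_gadget in Hfirst.
    apply gadget_inj, next_gadget_index_inj in Hfirst; auto. subst j'.
    now rewrite Hu, Hu', Hrest.
  - apply is_gadget_iff in Hg as [j [Hj Hu]].
    rewrite Hu, next_gadget_gadget in Hfirst.
    rewrite Hfirst, is_gadget_gadget in Hg' by apply next_gadget_index_lt. discriminate.
  - apply is_gadget_iff in Hg' as [j [Hj Hu]].
    rewrite Hu, next_gadget_gadget in Hfirst.
    rewrite <- Hfirst, is_gadget_gadget in Hg by apply next_gadget_index_lt. discriminate.
  - rewrite Hfirst. f_equal. apply IH; auto.
Qed.

End AdvanceGadget.

Lemma in_catalan_words n w : In w (catalan_words n) <-> is_catalan n w = true.
Proof.
  unfold catalan_words. rewrite filter_In, in_words.
  split; [tauto|]. intros Hw. split; auto. now apply is_catalan_iff in Hw.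
Qed.

Lemma NoDup_catalan_words n : NoDup (catalan_words n).
Proof. apply NoDup_filter, NoDup_words. Qed.

Definition gadget_class_count (m k n r : nat) : nat :=
  length (filter (fun w => Nat.eqb (maj w mod m) r && negb (no_gadget m k w)) (catalan_words n)).

Lemma gadget_class_count_le_next m k n r :
  0 < m -> gadget_class_count m k n r <= gadget_class_count m k n (S r mod m).
Proof.
  intros Hm. apply (filter_length_le_inj (advance_gadget m k)); [apply NoDup_catalan_words | |].
  - intros w Hw Hclass. apply andb_true_iff in Hclass as [Hr Hg].
    apply Nat.eqb_eq in Hr. apply negb_true_iff in Hg.
    destruct (advance_gadget_spec m k w Hg) as [p [s [j [Hj [Hw_eq Hadv]]]]].
    split.
    + apply in_catalan_words in Hw. apply in_catalan_words.
      rewrite Hadv. rewrite Hw_eq in Hw.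
      exact (is_catalan_swap_gadget n m p s j _ Hj (next_gadget_index_lt m Hm j) Hw).
    + rewrite no_gadget_advance by auto. rewrite andb_true_r. apply Nat.eqb_eq.
      destruct (maj_gadget m p s) as [b Hb].
      rewrite Hadv, Hb by (apply next_gadget_index_lt; auto).
      rewrite Hw_eq, Hb in Hr by auto. subst r.
      replace (S ((b + j) mod m)) with (1 + (b + j) mod m) by lia.
      rewrite !Nat.Div0.add_mod_idemp_r. f_equal. lia.
  - intros w v _ _ Hw Hv. apply andb_true_iff in Hw, Hv.
    apply (advance_gadget_inj m Hm k); apply negb_true_iff; tauto.
Qed.

Lemma cyclic_le_const (f : nat -> nat) m : 0 < m ->
  (forall r, r < m -> f r <= f (S r mod m)) -> forall r, r < m -> f r = f 0.
Proof.
  intros Hm Hstep.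
  assert (Hup : forall r, S r < m -> f r <= f (S r)).
  { intros r Hr. rewrite <- (Nat.mod_small (S r) m) by auto. apply Hstep. lia. }
  assert (Hwrap : f (m - 1) <= f 0).
  { specialize (Hstep (m - 1) ltac:(lia)).
    now replace (S (m - 1)) with m in Hstep by lia; rewrite Nat.Div0.mod_same in Hstep. }
  assert (Hbelow : forall r, r < m -> f 0 <= f r).
  { induction r as [|r IH]; intros Hr; auto.
    specialize (Hup r Hr). specialize (IH ltac:(lia)). lia. }
  assert (Habove : forall d, d < m -> f (m - 1 - d) <= f (m - 1)).
  { induction d as [|d IH]; intros Hd; [now rewrite Nat.sub_0_r|].
    specialize (Hup (m - 1 - S d) ltac:(lia)). specialize (IH ltac:(lia)).
    replace (S (m - 1 - S d)) with (m - 1 - d) in Hup by lia. lia. }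
  intros r Hr. specialize (Hbelow r Hr). specialize (Habove (m - 1 - r) ltac:(lia)).
  replace (m - 1 - (m - 1 - r)) with r in Habove by lia. lia.
Qed.

Lemma gadget_class_count_const m k n r :
  0 < m -> r < m -> gadget_class_count m k n r = gadget_class_count m k n 0.
Proof.
  intros Hm. apply (cyclic_le_const (gadget_class_count m k n)); auto.
  intros; now apply gadget_class_count_le_next.
Qed.

Lemma mul_gadget_class_count m k n : 0 < m ->
  m * gadget_class_count m k n 0
  = length (filter (fun w => negb (no_gadget m k w)) (catalan_words n)).
Proof.
  intros Hm.
  rewrite <- (filter_length_partition (fun w => maj w mod m) _ m)
    by (intros; apply Nat.mod_upper_bound; lia).
  rewrite (nat_sum_ext _ (fun _ => gadget_class_count m k n 0)), nat_sum_const; [lia|].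
  intros r Hr. now rewrite <- (gadget_class_count_const m k n r).
Qed.

Lemma count_words_no_gadget m k rr :
  count_words (k * (m + 2) + rr) (no_gadget m k)
  = count_words (m + 2) (fun u => negb (is_gadget m u)) ^ k * 2 ^ rr.
Proof.
  induction k as [|k IH].
  - rewrite <- count_words_all. simpl. lia.
  - replace (S k * (m + 2) + rr) with ((m + 2) + (k * (m + 2) + rr)) by lia.
    change (no_gadget m (S k)) with
      (fun w => negb (is_gadget m (firstn (m + 2) w)) && no_gadget m k (skipn (m + 2) w)).
    rewrite (count_words_app (m + 2) _ (fun u => negb (is_gadget m u)) (no_gadget m k)), IH.
    simpl. lia.
Qed.

Lemma count_words_not_gadget_le m : 0 < m ->
  count_words (m + 2) (fun u => negb (is_gadget m u)) <= 2 ^ (m + 2) - 1.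
Proof.
  intros Hm.
  assert (Hsome : 1 <= count_words (m + 2) (is_gadget m)).
  { assert (Hin : In (gadget m 0) (filter (is_gadget m) (words (m + 2)))).
    { apply filter_In. rewrite in_words, length_gadget, is_gadget_gadget by auto. auto. }
    unfold count_words.
    destruct (filter (is_gadget m) (words (m + 2))); simpl in *; [tauto | lia]. }
  pose proof (count_words_negb (m + 2) (is_gadget m)). lia.
Qed.

Lemma no_gadget_catalan_le m n : 0 < m ->
  length (filter (no_gadget m (2 * n / (m + 2))) (catalan_words n))
  <= (2 ^ (m + 2) - 1) ^ (2 * n / (m + 2)) * 2 ^ (2 * n mod (m + 2)).
Proof.
  intros Hm. set (k := 2 * n / (m + 2)). set (rr := 2 * n mod (m + 2)).
  unfold catalan_words.
  apply Nat.le_trans with (count_words (2 * n) (no_gadget m k)).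
  { unfold count_words. clear. induction (words (2 * n)) as [|w l IH]; simpl; auto.
    destruct (is_catalan n w); simpl; destruct (no_gadget m k w); simpl; lia. }
  replace (2 * n) with (k * (m + 2) + rr) at 1
    by (unfold k, rr; rewrite Nat.mul_comm; symmetry; apply Nat.div_mod; lia).
  rewrite count_words_no_gadget.
  apply Nat.mul_le_mono_r, Nat.pow_le_mono_l, count_words_not_gadget_le, Hm.
Qed.

(** * Asymptotics *)

Open Scope R_scope.

Lemma cubic_term_le_pow (d : R) k : 0 <= d ->
  INR k * (INR k - 1) * (INR k - 2) / 6 * d ^ 3 <= (1 + d) ^ k.
Proof.
  intros Hd.
  enough (Hbinom : 1 + INR k * d + INR k * (INR k - 1) / 2 * d ^ 2
                   + INR k * (INR k - 1) * (INR k - 2) / 6 * d ^ 3 <= (1 + d) ^ k).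
  { assert (0 <= INR k * d) by (apply Rmult_le_pos; [apply pos_INR | lra]).
    assert (0 <= INR k * (INR k - 1)).
    { destruct k as [|k]; [simpl; lra|]. rewrite S_INR. pose proof (pos_INR k). nra. }
    assert (0 <= d ^ 2) by (apply pow_le; lra). nra. }
  induction k as [|k IH]; [simpl; lra|].
  rewrite S_INR. simpl pow in IH |- *.
  assert (Hcube : 0 <= INR k * (INR k - 1) * (INR k - 2)).
  { destruct k as [|[|k]]; [simpl; lra | simpl; lra|].
    rewrite !S_INR. pose proof (pos_INR k). apply Rmult_le_pos; [apply Rmult_le_pos|]; lra. }
  assert (0 <= INR k * (INR k - 1) * (INR k - 2) * (d * d * d * d))
    by (apply Rmult_le_pos; [lra | repeat apply Rmult_le_pos; lra]).
  assert (Hmul := Rmult_le_compat_l (1 + d) _ _ ltac:(lra) IH).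
  nra.
Qed.

Lemma square_mul_geom_small q eps : 0 < q < 1 -> 0 < eps ->
  exists k0, forall k, (k0 <= k)%nat -> (INR k + 1) ^ 2 * q ^ k < eps.
Proof.
  intros [Hq0 Hq1] Heps.
  set (d := / q - 1).
  assert (Hd : 0 < d).
  { unfold d. replace (/ q - 1) with ((1 - q) / q) by (field; lra). apply Rdiv_lt_0_compat; lra. }
  assert (Hd3 : 0 < d ^ 3) by (apply pow_lt; lra).
  destruct (INR_unbounded (24 / (eps * d ^ 3))) as [k1 Hk1].
  exists (k1 + 5)%nat. intros k Hk.
  assert (Hkbig : 24 / (eps * d ^ 3) < INR k)
    by (apply Rlt_le_trans with (INR k1); [lra | apply le_INR; lia]).
  assert (Hk5 : 5 <= INR k) by (replace 5 with (INR 5) by (simpl; lra); apply le_INR; lia).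
  set (x := INR k) in *.
  assert (Hqk : q ^ k * (1 + d) ^ k = 1).
  { rewrite <- Rpow_mult_distr. unfold d.
    replace (q * (1 + (/ q - 1))) with 1 by (field; lra). apply pow1. }
  assert (Hqpos : 0 < q ^ k) by (apply pow_lt; lra).
  assert (Hcube := cubic_term_le_pow d k ltac:(lra)). fold x in Hcube.
  assert (Hsq : (x + 1) ^ 2 * q ^ k * (x * d ^ 3) <= 24).
  { assert ((x + 1) ^ 2 <= 4 * ((x - 1) * (x - 2))) by nra.
    assert (x * (x - 1) * (x - 2) * d ^ 3 * q ^ k <= 6) by nra.
    assert (0 <= x * d ^ 3 * q ^ k) by (apply Rmult_le_pos; [apply Rmult_le_pos|]; lra).
    nra. }
  assert (24 < eps * (x * d ^ 3)).
  { apply (Rmult_lt_compat_l (eps * d ^ 3)) in Hkbig; [|apply Rmult_lt_0_compat; lra].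
    replace (eps * d ^ 3 * (24 / (eps * d ^ 3))) with 24 in Hkbig by (field; lra). lra. }
  apply (Rmult_lt_reg_r (x * d ^ 3)); [apply Rmult_lt_0_compat; lra | lra].
Qed.

Lemma one_sub_inv_pow2_bounds L : (0 < L)%nat -> 0 < 1 - / 2 ^ L < 1.
Proof.
  intros HL. assert (1 < 2 ^ L) by (apply Rlt_pow_R1; [lra | exact HL]).
  assert (0 < / 2 ^ L) by (apply Rinv_0_lt_compat; lra).
  assert (/ 2 ^ L < / 1) by (apply Rinv_1_lt_contravar; lra).
  rewrite Rinv_1 in *. lra.
Qed.

Lemma ratio_deviation_le (c g b B C m : R) :
  c = g + b -> m * g + B = C -> 0 <= b <= B -> 0 < C -> 1 <= m ->
  Rabs (c / C - 1 / m) <= B / C.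
Proof.
  intros Hc HC Hb HCpos Hm.
  replace (c / C - 1 / m) with ((m * b - B) / (m * C)) by (subst; field; lra).
  unfold Rdiv. rewrite Rabs_mult, (Rabs_right (/ (m * C))) by (left; apply Rinv_0_lt_compat; nra).
  apply (Rmult_le_reg_r (m * C)); [nra|].
  rewrite Rmult_assoc, Rinv_l, Rmult_1_r by nra.
  replace (B * / C * (m * C)) with (m * B) by (field; lra).
  apply Rabs_le. nra.
Qed.

Lemma length_catalan_words_pos n : (0 < length (catalan_words n))%nat.
Proof.
  pose proof (pow4_le_catalan_count n).
  assert (1 <= 4 ^ n)%nat by (apply Nat.pow_le_mono_r with (a := 4%nat) (b := 0%nat); lia).
  destruct (length (catalan_words n)); lia.
Qed.

Lemma no_gadget_ratio_le m n : (0 < m)%nat ->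
  INR (length (filter (no_gadget m (2 * n / (m + 2))) (catalan_words n)))
    / INR (length (catalan_words n))
  <= (INR (m + 2) * (INR (2 * n / (m + 2)) + 1)) ^ 2 * (1 - / 2 ^ (m + 2)) ^ (2 * n / (m + 2)).
Proof.
  intros Hm.
  set (L := (m + 2)%nat) in *. set (K := (2 * n / L)%nat). set (rr := (2 * n mod L)%nat).
  set (Bad := length (filter (no_gadget m K) (catalan_words n))).
  set (C := length (catalan_words n)).
  set (T := 2 ^ L). set (q := 1 - / T).
  assert (HT : 1 <= T) by (apply pow_R1_Rle; lra).
  assert (Hdiv : (2 * n = L * K + rr)%nat) by (apply Nat.div_mod; unfold L; lia).
  assert (Hrr : (rr < L)%nat) by (apply Nat.mod_upper_bound; unfold L; lia).
  assert (Hpow4 : INR (4 ^ n) = T ^ K * 2 ^ rr).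
  { rewrite pow_INR. replace (INR 4) with (2 ^ 2) by (simpl; lra).
    unfold T. rewrite <- !pow_mult, <- pow_add. f_equal. lia. }
  assert (HBad : INR Bad <= q ^ K * INR (4 ^ n)).
  { assert (HB := le_INR _ _ (no_gadget_catalan_le m n Hm)). fold L K rr Bad in HB.
    rewrite mult_INR, !pow_INR, minus_INR in HB
      by (apply Nat.pow_le_mono_r with (a := 2%nat) (b := 0%nat); lia).
    rewrite pow_INR in HB. change (INR 2) with 2 in HB. change (INR 1) with 1 in HB.
    fold T in HB.
    rewrite Hpow4, <- Rmult_assoc, <- Rpow_mult_distr.
    replace (q * T) with (T - 1) by (unfold q; field; lra). exact HB. }
  assert (HC : INR (4 ^ n) <= (INR (2 * n) + 1) ^ 2 * INR C).
  { assert (H4 := le_INR _ _ (pow4_le_catalan_count n)).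
    rewrite !mult_INR, S_INR in H4. fold C in H4. nra. }
  assert (HCpos : 0 < INR C) by apply lt_0_INR, length_catalan_words_pos.
  assert (Hlen : 0 <= INR (2 * n) + 1 <= INR L * (INR K + 1)).
  { split; [pose proof (pos_INR (2 * n)); lra|].
    rewrite <- S_INR, <- S_INR, <- mult_INR. apply le_INR. lia. }
  assert (Hq : 0 <= q ^ K)
    by (apply pow_le, Rlt_le, one_sub_inv_pow2_bounds; unfold L; lia).
  assert ((INR (2 * n) + 1) ^ 2 <= (INR L * (INR K + 1)) ^ 2) by (apply pow_incr; lra).
  assert (q ^ K * INR (4 ^ n) <= q ^ K * ((INR L * (INR K + 1)) ^ 2 * INR C)).
  { apply Rmult_le_compat_l; [lra|]. apply (Rle_trans _ _ _ HC), Rmult_le_compat_r; lra. }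
  apply (Rmult_le_reg_r (INR C)); [lra|].
  unfold Rdiv. rewrite Rmult_assoc, Rinv_l, Rmult_1_r by lra.
  lra.
Qed.

Lemma maj_class_deviation_le m r n : (0 < m)%nat -> (r < m)%nat ->
  Rabs (INR (maj_class_count m r n) / INR (length (catalan_words n)) - 1 / INR m)
  <= (INR (m + 2) * (INR (2 * n / (m + 2)) + 1)) ^ 2 * (1 - / 2 ^ (m + 2)) ^ (2 * n / (m + 2)).
Proof.
  intros Hm Hr.
  set (K := (2 * n / (m + 2))%nat).
  set (P := fun w => Nat.eqb (maj w mod m) r).
  eapply Rle_trans; [|apply no_gadget_ratio_le, Hm]. fold K.
  apply ratio_deviation_le with
    (g := INR (gadget_class_count m K n r))
    (b := INR (length (filter (fun w => P w && no_gadget m K w) (catalan_words n)))).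
  - rewrite <- plus_INR. f_equal. apply filter_length_split.
  - rewrite <- mult_INR, <- plus_INR. f_equal.
    rewrite gadget_class_count_const, mul_gadget_class_count by auto.
    rewrite Nat.add_comm. apply filter_length.
  - split; [apply pos_INR|]. apply le_INR, filter_length_le_in.
    intros w _ Hw. now apply andb_true_iff in Hw.
  - apply lt_0_INR, length_catalan_words_pos.
  - apply (le_INR 1). lia.
Qed.

Theorem theorem3 (m r : nat) (hm : (2 <= m)%nat) (hr : (r <= m - 1)%nat) :
  Un_cv (fun n : nat => INR (maj_class_count m r n) / INR (length (catalan_words n)))
        (1 / INR m).
Proof.
  intros eps Heps.
  set (L := (m + 2)%nat). set (q := 1 - / 2 ^ L).
  assert (HL : 0 < INR L) by (apply lt_0_INR; unfold L; lia).
  assert (Hq : 0 < q < 1) by (apply one_sub_inv_pow2_bounds; unfold L; lia).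
  destruct (square_mul_geom_small q (eps / INR L ^ 2) Hq) as [k0 Hk0].
  { apply Rdiv_lt_0_compat; [lra | apply pow_lt, HL]. }
  exists (L * k0)%nat. intros n Hn. unfold R_dist.
  apply (Rle_lt_trans _ _ _ (maj_class_deviation_le m r n ltac:(lia) ltac:(lia))). fold L q.
  assert (Hk : (k0 <= 2 * n / L)%nat) by (apply Nat.div_le_lower_bound; unfold L; lia).
  specialize (Hk0 _ Hk).
  rewrite Rpow_mult_distr, Rmult_assoc.
  apply (Rmult_lt_compat_l (INR L ^ 2)) in Hk0; [|apply pow_lt, HL].
  replace (INR L ^ 2 * (eps / INR L ^ 2)) with eps in Hk0 by (field; lra). exact Hk0.
Qed.
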